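(* Let $C$ be a double category and $\epsilon_C:\gamma C\to C$ the inclusion of its globularily generated piece. Then for every globularily generated double category $D$ and every double functor $F:D\to C$ there exists a unique double functor $\tilde F:D\to\gamma C$ with $\epsilon_C\circ\tilde F=F$. This universal property characterizes $\gamma C$ (together with $\epsilon_C$) up to double isomorphism.
   Context: Double categories are not assumed strict; a 2-morphism is globular if source and target are identity vertical morphisms; unitor/associator components are globular. A sub-double category $D\subseteq C$ has $D_0\subseteq C_0$, $D_1\subseteq C_1$ subcategories closed under source, target, horizontal identity, horizontal composition and the constraint isomorphisms; it is complete if it has the same objects, vertical morphisms and horizontal morphisms as $C$. The globularily generated piece $\gamma C$ is the intersection of all complete sub-double categories of $C$ containing all globular 2-morphisms of $C$. A double category $D$ is globularily generated if $\gamma D=D$. *)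

(* Pseudo (= weak, Grandis-Pare) double categories, encoded
   "algebraically": every kind of arrow forms a type equipped with source /
   target maps, and the partial compositions take a proof of composability.
   All compositions are written in DIAGRAMMATIC order:
     vcomp f g e  = "f then g"  (vertical morphisms, category C_0)
     ccomp a b e  = "a then b"  (2-morphisms, vertical composition in C_1)
     hcomp h k e  = "h then k"  (horizontal morphisms, hsrc/htgt)
     chcomp a b e = "a then b"  (horizontal composition of 2-morphisms).
   A 2-morphism a has vertical source/target (horizontal morphisms)
   cdom a / ccod a (the source and target in C_1) and horizontal
   source/target (vertical morphisms) csrc a / ctgt a (the functors s,t). *)

Record DC : Type := mkDC {
  Ob : Type; VM : Type; HM : Type; Cell : Type;
  vdom : VM -> Ob; vcod : VM -> Ob; vid : Ob -> VM;
  vcomp : forall f g : VM, vcod f = vdom g -> VM;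
  cdom : Cell -> HM; ccod : Cell -> HM; cid : HM -> Cell;
  ccomp : forall a b : Cell, ccod a = cdom b -> Cell;
  hsrc : HM -> Ob; htgt : HM -> Ob; csrc : Cell -> VM; ctgt : Cell -> VM;
  hunit : Ob -> HM; cunit : VM -> Cell;
  hcomp : forall h k : HM, htgt h = hsrc k -> HM;
  chcomp : forall a b : Cell, ctgt a = csrc b -> Cell;
  assoc : forall h k l : HM, htgt h = hsrc k -> htgt k = hsrc l -> Cell;
  assoc_inv : forall h k l : HM, htgt h = hsrc k -> htgt k = hsrc l -> Cell;
  lunit : HM -> Cell; lunit_inv : HM -> Cell;
  runit : HM -> Cell; runit_inv : HM -> Cell }.

Arguments vdom {_} _. Arguments vcod {_} _. Arguments vid {_} _.
Arguments vcomp {_} _ _ _. Arguments cdom {_} _. Arguments ccod {_} _.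
Arguments cid {_} _. Arguments ccomp {_} _ _ _. Arguments hsrc {_} _.
Arguments htgt {_} _. Arguments csrc {_} _. Arguments ctgt {_} _.
Arguments hunit {_} _. Arguments cunit {_} _. Arguments hcomp {_} _ _ _.
Arguments chcomp {_} _ _ _. Arguments assoc {_} _ _ _ _ _.
Arguments assoc_inv {_} _ _ _ _ _. Arguments lunit {_} _.
Arguments lunit_inv {_} _. Arguments runit {_} _. Arguments runit_inv {_} _.

Record isDC (C : DC) : Prop := {
  vid_dom : forall x : Ob C, vdom (vid x) = x;
  vid_cod : forall x : Ob C, vcod (vid x) = x;
  vcomp_dom : forall (f g : VM C) (e : vcod f = vdom g), vdom (vcomp f g e) = vdom f;
  vcomp_cod : forall (f g : VM C) (e : vcod f = vdom g), vcod (vcomp f g e) = vcod g;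
  vcomp_idl : forall (f : VM C) (e : vcod (vid (vdom f)) = vdom f), vcomp (vid (vdom f)) f e = f;
  vcomp_idr : forall (f : VM C) (e : vcod f = vdom (vid (vcod f))), vcomp f (vid (vcod f)) e = f;
  vcomp_assoc : forall (f g h : VM C) (e1 : vcod f = vdom g) (e2 : vcod (vcomp f g e1) = vdom h)
      (e3 : vcod g = vdom h) (e4 : vcod f = vdom (vcomp g h e3)),
      vcomp (vcomp f g e1) h e2 = vcomp f (vcomp g h e3) e4;
  cid_dom : forall h : HM C, cdom (cid h) = h;
  cid_cod : forall h : HM C, ccod (cid h) = h;
  ccomp_dom : forall (a b : Cell C) (e : ccod a = cdom b), cdom (ccomp a b e) = cdom a;
  ccomp_cod : forall (a b : Cell C) (e : ccod a = cdom b), ccod (ccomp a b e) = ccod b;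
  ccomp_idl : forall (a : Cell C) (e : ccod (cid (cdom a)) = cdom a), ccomp (cid (cdom a)) a e = a;
  ccomp_idr : forall (a : Cell C) (e : ccod a = cdom (cid (ccod a))), ccomp a (cid (ccod a)) e = a;
  ccomp_assoc : forall (a b c : Cell C) (e1 : ccod a = cdom b) (e2 : ccod (ccomp a b e1) = cdom c)
      (e3 : ccod b = cdom c) (e4 : ccod a = cdom (ccomp b c e3)),
      ccomp (ccomp a b e1) c e2 = ccomp a (ccomp b c e3) e4;
  csrc_dom : forall a : Cell C, vdom (csrc a) = hsrc (cdom a);
  csrc_cod : forall a : Cell C, vcod (csrc a) = hsrc (ccod a);
  ctgt_dom : forall a : Cell C, vdom (ctgt a) = htgt (cdom a);
  ctgt_cod : forall a : Cell C, vcod (ctgt a) = htgt (ccod a);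
  csrc_id : forall h : HM C, csrc (cid h) = vid (hsrc h);
  ctgt_id : forall h : HM C, ctgt (cid h) = vid (htgt h);
  csrc_comp : forall (a b : Cell C) (e : ccod a = cdom b) (e' : vcod (csrc a) = vdom (csrc b)),
      csrc (ccomp a b e) = vcomp (csrc a) (csrc b) e';
  ctgt_comp : forall (a b : Cell C) (e : ccod a = cdom b) (e' : vcod (ctgt a) = vdom (ctgt b)),
      ctgt (ccomp a b e) = vcomp (ctgt a) (ctgt b) e';
  cunit_dom : forall f : VM C, cdom (cunit f) = hunit (vdom f);
  cunit_cod : forall f : VM C, ccod (cunit f) = hunit (vcod f);
  cunit_id : forall x : Ob C, cunit (vid x) = cid (hunit x);
  cunit_comp : forall (f g : VM C) (e : vcod f = vdom g) (e' : ccod (cunit f) = cdom (cunit g)),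
      cunit (vcomp f g e) = ccomp (cunit f) (cunit g) e';
  hsrc_unit : forall x : Ob C, hsrc (hunit x) = x;
  htgt_unit : forall x : Ob C, htgt (hunit x) = x;
  csrc_unit : forall f : VM C, csrc (cunit f) = f;
  ctgt_unit : forall f : VM C, ctgt (cunit f) = f;
  hsrc_hcomp : forall (h k : HM C) (e : htgt h = hsrc k), hsrc (hcomp h k e) = hsrc h;
  htgt_hcomp : forall (h k : HM C) (e : htgt h = hsrc k), htgt (hcomp h k e) = htgt k;
  csrc_chcomp : forall (a b : Cell C) (e : ctgt a = csrc b), csrc (chcomp a b e) = csrc a;
  ctgt_chcomp : forall (a b : Cell C) (e : ctgt a = csrc b), ctgt (chcomp a b e) = ctgt b;
  cdom_chcomp : forall (a b : Cell C) (e : ctgt a = csrc b) (e' : htgt (cdom a) = hsrc (cdom b)),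
      cdom (chcomp a b e) = hcomp (cdom a) (cdom b) e';
  ccod_chcomp : forall (a b : Cell C) (e : ctgt a = csrc b) (e' : htgt (ccod a) = hsrc (ccod b)),
      ccod (chcomp a b e) = hcomp (ccod a) (ccod b) e';
  chcomp_id : forall (h k : HM C) (e : htgt h = hsrc k) (e' : ctgt (cid h) = csrc (cid k)),
      chcomp (cid h) (cid k) e' = cid (hcomp h k e);
  interchange : forall (a b a' b' : Cell C) (e : ctgt a = csrc b) (e' : ctgt a' = csrc b')
      (ea : ccod a = cdom a') (eb : ccod b = cdom b')
      (e1 : ctgt (ccomp a a' ea) = csrc (ccomp b b' eb))
      (e2 : ccod (chcomp a b e) = cdom (chcomp a' b' e')),
      chcomp (ccomp a a' ea) (ccomp b b' eb) e1 = ccomp (chcomp a b e) (chcomp a' b' e') e2;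
  assoc_dom : forall (h k l : HM C) (p : htgt h = hsrc k) (q : htgt k = hsrc l)
      (p1 : htgt (hcomp h k p) = hsrc l), cdom (assoc h k l p q) = hcomp (hcomp h k p) l p1;
  assoc_cod : forall (h k l : HM C) (p : htgt h = hsrc k) (q : htgt k = hsrc l)
      (q1 : htgt h = hsrc (hcomp k l q)), ccod (assoc h k l p q) = hcomp h (hcomp k l q) q1;
  assoc_src : forall (h k l : HM C) (p : htgt h = hsrc k) (q : htgt k = hsrc l),
      csrc (assoc h k l p q) = vid (hsrc h);
  assoc_tgt : forall (h k l : HM C) (p : htgt h = hsrc k) (q : htgt k = hsrc l),
      ctgt (assoc h k l p q) = vid (htgt l);
  assoc_inv_dom : forall (h k l : HM C) (p : htgt h = hsrc k) (q : htgt k = hsrc l)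
      (q1 : htgt h = hsrc (hcomp k l q)), cdom (assoc_inv h k l p q) = hcomp h (hcomp k l q) q1;
  assoc_inv_cod : forall (h k l : HM C) (p : htgt h = hsrc k) (q : htgt k = hsrc l)
      (p1 : htgt (hcomp h k p) = hsrc l), ccod (assoc_inv h k l p q) = hcomp (hcomp h k p) l p1;
  assoc_inv_src : forall (h k l : HM C) (p : htgt h = hsrc k) (q : htgt k = hsrc l),
      csrc (assoc_inv h k l p q) = vid (hsrc h);
  assoc_inv_tgt : forall (h k l : HM C) (p : htgt h = hsrc k) (q : htgt k = hsrc l),
      ctgt (assoc_inv h k l p q) = vid (htgt l);
  assoc_inv_l : forall (h k l : HM C) (p : htgt h = hsrc k) (q : htgt k = hsrc l)
      (p1 : htgt (hcomp h k p) = hsrc l)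
      (e : ccod (assoc h k l p q) = cdom (assoc_inv h k l p q)),
      ccomp (assoc h k l p q) (assoc_inv h k l p q) e = cid (hcomp (hcomp h k p) l p1);
  assoc_inv_r : forall (h k l : HM C) (p : htgt h = hsrc k) (q : htgt k = hsrc l)
      (q1 : htgt h = hsrc (hcomp k l q))
      (e : ccod (assoc_inv h k l p q) = cdom (assoc h k l p q)),
      ccomp (assoc_inv h k l p q) (assoc h k l p q) e = cid (hcomp h (hcomp k l q) q1);
  assoc_nat : forall (a b c : Cell C) (e1 : ctgt a = csrc b) (e2 : ctgt b = csrc c)
      (e3 : ctgt (chcomp a b e1) = csrc c) (e4 : ctgt a = csrc (chcomp b c e2))
      (d1 : htgt (cdom a) = hsrc (cdom b)) (d2 : htgt (cdom b) = hsrc (cdom c))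
      (c1 : htgt (ccod a) = hsrc (ccod b)) (c2 : htgt (ccod b) = hsrc (ccod c))
      (x1 : ccod (chcomp (chcomp a b e1) c e3) = cdom (assoc (ccod a) (ccod b) (ccod c) c1 c2))
      (x2 : ccod (assoc (cdom a) (cdom b) (cdom c) d1 d2) = cdom (chcomp a (chcomp b c e2) e4)),
      ccomp (chcomp (chcomp a b e1) c e3) (assoc (ccod a) (ccod b) (ccod c) c1 c2) x1
      = ccomp (assoc (cdom a) (cdom b) (cdom c) d1 d2) (chcomp a (chcomp b c e2) e4) x2;
  lunit_dom : forall (h : HM C) (e : htgt (hunit (hsrc h)) = hsrc h),
      cdom (lunit h) = hcomp (hunit (hsrc h)) h e;
  lunit_cod : forall h : HM C, ccod (lunit h) = h;
  lunit_src : forall h : HM C, csrc (lunit h) = vid (hsrc h);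
  lunit_tgt : forall h : HM C, ctgt (lunit h) = vid (htgt h);
  lunit_inv_dom : forall h : HM C, cdom (lunit_inv h) = h;
  lunit_inv_cod : forall (h : HM C) (e : htgt (hunit (hsrc h)) = hsrc h),
      ccod (lunit_inv h) = hcomp (hunit (hsrc h)) h e;
  lunit_inv_src : forall h : HM C, csrc (lunit_inv h) = vid (hsrc h);
  lunit_inv_tgt : forall h : HM C, ctgt (lunit_inv h) = vid (htgt h);
  lunit_inv_l : forall (h : HM C) (e : htgt (hunit (hsrc h)) = hsrc h)
      (x : ccod (lunit h) = cdom (lunit_inv h)),
      ccomp (lunit h) (lunit_inv h) x = cid (hcomp (hunit (hsrc h)) h e);
  lunit_inv_r : forall (h : HM C) (x : ccod (lunit_inv h) = cdom (lunit h)),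
      ccomp (lunit_inv h) (lunit h) x = cid h;
  lunit_nat : forall (a : Cell C) (e1 : ctgt (cunit (csrc a)) = csrc a)
      (x1 : ccod (chcomp (cunit (csrc a)) a e1) = cdom (lunit (ccod a)))
      (x2 : ccod (lunit (cdom a)) = cdom a),
      ccomp (chcomp (cunit (csrc a)) a e1) (lunit (ccod a)) x1 = ccomp (lunit (cdom a)) a x2;
  runit_dom : forall (h : HM C) (e : htgt h = hsrc (hunit (htgt h))),
      cdom (runit h) = hcomp h (hunit (htgt h)) e;
  runit_cod : forall h : HM C, ccod (runit h) = h;
  runit_src : forall h : HM C, csrc (runit h) = vid (hsrc h);
  runit_tgt : forall h : HM C, ctgt (runit h) = vid (htgt h);
  runit_inv_dom : forall h : HM C, cdom (runit_inv h) = h;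
  runit_inv_cod : forall (h : HM C) (e : htgt h = hsrc (hunit (htgt h))),
      ccod (runit_inv h) = hcomp h (hunit (htgt h)) e;
  runit_inv_src : forall h : HM C, csrc (runit_inv h) = vid (hsrc h);
  runit_inv_tgt : forall h : HM C, ctgt (runit_inv h) = vid (htgt h);
  runit_inv_l : forall (h : HM C) (e : htgt h = hsrc (hunit (htgt h)))
      (x : ccod (runit h) = cdom (runit_inv h)),
      ccomp (runit h) (runit_inv h) x = cid (hcomp h (hunit (htgt h)) e);
  runit_inv_r : forall (h : HM C) (x : ccod (runit_inv h) = cdom (runit h)),
      ccomp (runit_inv h) (runit h) x = cid h;
  runit_nat : forall (a : Cell C) (e1 : ctgt a = csrc (cunit (ctgt a)))
      (x1 : ccod (chcomp a (cunit (ctgt a)) e1) = cdom (runit (ccod a)))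
      (x2 : ccod (runit (cdom a)) = cdom a),
      ccomp (chcomp a (cunit (ctgt a)) e1) (runit (ccod a)) x1 = ccomp (runit (cdom a)) a x2;
  pentagon : forall (h k l m : HM C) (p : htgt h = hsrc k) (q : htgt k = hsrc l) (r : htgt l = hsrc m)
      (p1 : htgt (hcomp h k p) = hsrc l) (q1 : htgt k = hsrc (hcomp l m r))
      (x1 : ccod (assoc (hcomp h k p) l m p1 r) = cdom (assoc h k (hcomp l m r) p q1))
      (y1 : ctgt (assoc h k l p q) = csrc (cid m))
      (p2 : htgt h = hsrc (hcomp k l q)) (r2 : htgt (hcomp k l q) = hsrc m)
      (y2 : ctgt (cid h) = csrc (assoc k l m q r))
      (x2 : ccod (assoc h (hcomp k l q) m p2 r2) = cdom (chcomp (cid h) (assoc k l m q r) y2))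
      (x3 : ccod (chcomp (assoc h k l p q) (cid m) y1)
            = cdom (ccomp (assoc h (hcomp k l q) m p2 r2) (chcomp (cid h) (assoc k l m q r) y2) x2)),
      ccomp (assoc (hcomp h k p) l m p1 r) (assoc h k (hcomp l m r) p q1) x1
      = ccomp (chcomp (assoc h k l p q) (cid m) y1)
          (ccomp (assoc h (hcomp k l q) m p2 r2) (chcomp (cid h) (assoc k l m q r) y2) x2) x3;
  triangle : forall (h k : HM C) (p1 : htgt h = hsrc (hunit (htgt h)))
      (p2 : htgt (hunit (htgt h)) = hsrc k)
      (y : ctgt (cid h) = csrc (lunit k))
      (x : ccod (assoc h (hunit (htgt h)) k p1 p2) = cdom (chcomp (cid h) (lunit k) y))
      (z : ctgt (runit h) = csrc (cid k)),
      ccomp (assoc h (hunit (htgt h)) k p1 p2) (chcomp (cid h) (lunit k) y) x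
      = chcomp (runit h) (cid k) z }.

Definition is_iso {C : DC} (a : Cell C) : Prop :=
  exists (b : Cell C) (e1 : ccod a = cdom b) (e2 : ccod b = cdom a),
    ccomp a b e1 = cid (cdom a) /\ ccomp b a e2 = cid (ccod a).

Record DF (C D : DC) : Type := mkDF {
  fO : Ob C -> Ob D; fV : VM C -> VM D; fH : HM C -> HM D; fC : Cell C -> Cell D;
  (* unit comparison  U_{F x} => F (U_x) *)
  fU : Ob C -> Cell D;
  (* composition comparison  F h F k => F (h k) *)
  fM : forall h k : HM C, htgt h = hsrc k -> Cell D }.

Arguments fO {C D} _ _. Arguments fV {C D} _ _. Arguments fH {C D} _ _.
Arguments fC {C D} _ _. Arguments fU {C D} _ _. Arguments fM {C D} _ _ _ _.

Record isDF {C D : DC} (F : DF C D) : Prop := {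
  fV_dom : forall f : VM C, vdom (fV F f) = fO F (vdom f);
  fV_cod : forall f : VM C, vcod (fV F f) = fO F (vcod f);
  fV_id : forall x : Ob C, fV F (vid x) = vid (fO F x);
  fV_comp : forall (f g : VM C) (e : vcod f = vdom g) (e' : vcod (fV F f) = vdom (fV F g)),
      fV F (vcomp f g e) = vcomp (fV F f) (fV F g) e';
  fC_dom : forall a : Cell C, cdom (fC F a) = fH F (cdom a);
  fC_cod : forall a : Cell C, ccod (fC F a) = fH F (ccod a);
  fC_id : forall h : HM C, fC F (cid h) = cid (fH F h);
  fC_comp : forall (a b : Cell C) (e : ccod a = cdom b) (e' : ccod (fC F a) = cdom (fC F b)),
      fC F (ccomp a b e) = ccomp (fC F a) (fC F b) e';
  fH_src : forall h : HM C, hsrc (fH F h) = fO F (hsrc h);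
  fH_tgt : forall h : HM C, htgt (fH F h) = fO F (htgt h);
  fC_src : forall a : Cell C, csrc (fC F a) = fV F (csrc a);
  fC_tgt : forall a : Cell C, ctgt (fC F a) = fV F (ctgt a);
  fU_dom : forall x : Ob C, cdom (fU F x) = hunit (fO F x);
  fU_cod : forall x : Ob C, ccod (fU F x) = fH F (hunit x);
  fU_src : forall x : Ob C, csrc (fU F x) = vid (fO F x);
  fU_tgt : forall x : Ob C, ctgt (fU F x) = vid (fO F x);
  fU_iso : forall x : Ob C, is_iso (fU F x);
  fU_nat : forall (f : VM C)
      (x1 : ccod (cunit (fV F f)) = cdom (fU F (vcod f)))
      (x2 : ccod (fU F (vdom f)) = cdom (fC F (cunit f))),
      ccomp (cunit (fV F f)) (fU F (vcod f)) x1 = ccomp (fU F (vdom f)) (fC F (cunit f)) x2;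
  fM_dom : forall (h k : HM C) (e : htgt h = hsrc k) (e' : htgt (fH F h) = hsrc (fH F k)),
      cdom (fM F h k e) = hcomp (fH F h) (fH F k) e';
  fM_cod : forall (h k : HM C) (e : htgt h = hsrc k), ccod (fM F h k e) = fH F (hcomp h k e);
  fM_src : forall (h k : HM C) (e : htgt h = hsrc k), csrc (fM F h k e) = vid (fO F (hsrc h));
  fM_tgt : forall (h k : HM C) (e : htgt h = hsrc k), ctgt (fM F h k e) = vid (fO F (htgt k));
  fM_iso : forall (h k : HM C) (e : htgt h = hsrc k), is_iso (fM F h k e);
  fM_nat : forall (a b : Cell C) (e : ctgt a = csrc b) (e' : ctgt (fC F a) = csrc (fC F b))
      (d : htgt (cdom a) = hsrc (cdom b)) (c : htgt (ccod a) = hsrc (ccod b))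
      (x1 : ccod (chcomp (fC F a) (fC F b) e') = cdom (fM F (ccod a) (ccod b) c))
      (x2 : ccod (fM F (cdom a) (cdom b) d) = cdom (fC F (chcomp a b e))),
      ccomp (chcomp (fC F a) (fC F b) e') (fM F (ccod a) (ccod b) c) x1
      = ccomp (fM F (cdom a) (cdom b) d) (fC F (chcomp a b e)) x2;
  fM_assoc : forall (h k l : HM C) (p : htgt h = hsrc k) (q : htgt k = hsrc l)
      (p' : htgt (fH F h) = hsrc (fH F k)) (q' : htgt (fH F k) = hsrc (fH F l))
      (y1 : ctgt (fM F h k p) = csrc (cid (fH F l)))
      (p1 : htgt (hcomp h k p) = hsrc l)
      (x1 : ccod (chcomp (fM F h k p) (cid (fH F l)) y1) = cdom (fM F (hcomp h k p) l p1))
      (x2 : ccod (ccomp (chcomp (fM F h k p) (cid (fH F l)) y1) (fM F (hcomp h k p) l p1) x1)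
            = cdom (fC F (assoc h k l p q)))
      (y2 : ctgt (cid (fH F h)) = csrc (fM F k l q))
      (x3 : ccod (assoc (fH F h) (fH F k) (fH F l) p' q')
            = cdom (chcomp (cid (fH F h)) (fM F k l q) y2))
      (q1 : htgt h = hsrc (hcomp k l q))
      (x4 : ccod (ccomp (assoc (fH F h) (fH F k) (fH F l) p' q')
                        (chcomp (cid (fH F h)) (fM F k l q) y2) x3)
            = cdom (fM F h (hcomp k l q) q1)),
      ccomp (ccomp (chcomp (fM F h k p) (cid (fH F l)) y1) (fM F (hcomp h k p) l p1) x1)
            (fC F (assoc h k l p q)) x2
      = ccomp (ccomp (assoc (fH F h) (fH F k) (fH F l) p' q')
                     (chcomp (cid (fH F h)) (fM F k l q) y2) x3)
              (fM F h (hcomp k l q) q1) x4;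
  fU_lunit : forall (h : HM C) (p : htgt (hunit (hsrc h)) = hsrc h)
      (y : ctgt (fU F (hsrc h)) = csrc (cid (fH F h)))
      (x1 : ccod (chcomp (fU F (hsrc h)) (cid (fH F h)) y) = cdom (fM F (hunit (hsrc h)) h p))
      (x2 : ccod (ccomp (chcomp (fU F (hsrc h)) (cid (fH F h)) y) (fM F (hunit (hsrc h)) h p) x1)
            = cdom (fC F (lunit h))),
      ccomp (ccomp (chcomp (fU F (hsrc h)) (cid (fH F h)) y) (fM F (hunit (hsrc h)) h p) x1)
            (fC F (lunit h)) x2 = lunit (fH F h);
  fU_runit : forall (h : HM C) (p : htgt h = hsrc (hunit (htgt h)))
      (y : ctgt (cid (fH F h)) = csrc (fU F (htgt h)))
      (x1 : ccod (chcomp (cid (fH F h)) (fU F (htgt h)) y) = cdom (fM F h (hunit (htgt h)) p))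
      (x2 : ccod (ccomp (chcomp (cid (fH F h)) (fU F (htgt h)) y) (fM F h (hunit (htgt h)) p) x1)
            = cdom (fC F (runit h))),
      ccomp (ccomp (chcomp (cid (fH F h)) (fU F (htgt h)) y) (fM F h (hunit (htgt h)) p) x1)
            (fC F (runit h)) x2 = runit (fH F h) }.

(* "G o H = F": equality of the composite pseudo double functor with F,
   written out componentwise (the composite has comparison cells
   G(H h) G(H k) => G(H h H k) => G(H(h k)) and similarly for units). *)
Definition DFcomp_eq {C D E : DC} (G : DF D E) (H : DF C D) (F : DF C E) : Prop :=
  (forall x : Ob C, fO G (fO H x) = fO F x) /\
  (forall f : VM C, fV G (fV H f) = fV F f) /\
  (forall h : HM C, fH G (fH H h) = fH F h) /\
  (forall a : Cell C, fC G (fC H a) = fC F a) /\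
  (forall (x : Ob C) (e : ccod (fU G (fO H x)) = cdom (fC G (fU H x))),
      ccomp (fU G (fO H x)) (fC G (fU H x)) e = fU F x) /\
  (forall (h k : HM C) (p : htgt h = hsrc k) (p' : htgt (fH H h) = hsrc (fH H k))
      (e : ccod (fM G (fH H h) (fH H k) p') = cdom (fC G (fM H h k p))),
      ccomp (fM G (fH H h) (fH H k) p') (fC G (fM H h k p)) e = fM F h k p).

Definition DF_id (C : DC) : DF C C :=
  mkDF C C (fun x => x) (fun f => f) (fun h => h) (fun a => a)
    (fun x => cid (hunit x)) (fun h k e => cid (hcomp h k e)).

Definition double_iso {C D : DC} (F : DF C D) : Prop :=
  exists G : DF D C, isDF G /\ DFcomp_eq G F (DF_id C) /\ DFcomp_eq F G (DF_id D).

Record SubDC (C : DC) : Type := {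
  sO : Ob C -> Prop; sV : VM C -> Prop; sH : HM C -> Prop; sC : Cell C -> Prop;
  s_vdom : forall f, sV f -> sO (vdom f);
  s_vcod : forall f, sV f -> sO (vcod f);
  s_vid : forall x, sO x -> sV (vid x);
  s_vcomp : forall f g (e : vcod f = vdom g), sV f -> sV g -> sV (vcomp f g e);
  s_cdom : forall a, sC a -> sH (cdom a);
  s_ccod : forall a, sC a -> sH (ccod a);
  s_cid : forall h, sH h -> sC (cid h);
  s_ccomp : forall a b (e : ccod a = cdom b), sC a -> sC b -> sC (ccomp a b e);
  s_hsrc : forall h, sH h -> sO (hsrc h);
  s_htgt : forall h, sH h -> sO (htgt h);
  s_csrc : forall a, sC a -> sV (csrc a);
  s_ctgt : forall a, sC a -> sV (ctgt a);
  s_hunit : forall x, sO x -> sH (hunit x);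
  s_cunit : forall f, sV f -> sC (cunit f);
  s_hcomp : forall h k (e : htgt h = hsrc k), sH h -> sH k -> sH (hcomp h k e);
  s_chcomp : forall a b (e : ctgt a = csrc b), sC a -> sC b -> sC (chcomp a b e);
  s_assoc : forall h k l p q, sH h -> sH k -> sH l -> sC (assoc h k l p q);
  s_assoc_inv : forall h k l p q, sH h -> sH k -> sH l -> sC (assoc_inv h k l p q);
  s_lunit : forall h, sH h -> sC (lunit h);
  s_lunit_inv : forall h, sH h -> sC (lunit_inv h);
  s_runit : forall h, sH h -> sC (runit h);
  s_runit_inv : forall h, sH h -> sC (runit_inv h) }.

Arguments sO {C} _ _. Arguments sV {C} _ _. Arguments sH {C} _ _. Arguments sC {C} _ _.

Definition complete {C : DC} (S : SubDC C) : Prop :=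
  (forall x, sO S x) /\ (forall f, sV S f) /\ (forall h, sH S h).

Definition globular {C : DC} (a : Cell C) : Prop :=
  (exists x, csrc a = vid x) /\ (exists y, ctgt a = vid y).

(* the admissible sub-double categories whose intersection is gamma C *)
Definition gadm {C : DC} (S : SubDC C) : Prop :=
  complete S /\ (forall a : Cell C, globular a -> sC S a).

Definition gammaSub (C : DC) : SubDC C.
Proof.
  refine (Build_SubDC C
    (fun x => forall S, gadm S -> sO S x) (fun f => forall S, gadm S -> sV S f)
    (fun h => forall S, gadm S -> sH S h) (fun a => forall S, gadm S -> sC S a)
    _ _ _ _ _ _ _ _ _ _ _ _ _ _ _ _ _ _ _ _ _ _);
  intros; match goal with T : SubDC C, HT : gadm _ |- _ =>
  first
  [ apply (s_vdom C T); auto | apply (s_vcod C T); auto | apply (s_vid C T); auto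
  | apply (s_vcomp C T); auto | apply (s_cdom C T); auto | apply (s_ccod C T); auto
  | apply (s_cid C T); auto | apply (s_ccomp C T); auto | apply (s_hsrc C T); auto
  | apply (s_htgt C T); auto | apply (s_csrc C T); auto | apply (s_ctgt C T); auto
  | apply (s_hunit C T); auto | apply (s_cunit C T); auto | apply (s_hcomp C T); auto
  | apply (s_chcomp C T); auto | apply (s_assoc C T); auto | apply (s_assoc_inv C T); auto
  | apply (s_lunit C T); auto | apply (s_lunit_inv C T); auto | apply (s_runit C T); auto
  | apply (s_runit_inv C T); auto ] end.
Defined.

Definition sub_DC (C : DC) (S : SubDC C) : DC :=
  mkDC
    {x : Ob C | sO S x} {f : VM C | sV S f} {h : HM C | sH S h} {a : Cell C | sC S a}
    (fun f => exist _ (vdom (proj1_sig f)) (s_vdom C S _ (proj2_sig f)))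
    (fun f => exist _ (vcod (proj1_sig f)) (s_vcod C S _ (proj2_sig f)))
    (fun x => exist _ (vid (proj1_sig x)) (s_vid C S _ (proj2_sig x)))
    (fun f g e => exist _ (vcomp (proj1_sig f) (proj1_sig g) (f_equal (@proj1_sig _ _) e))
                    (s_vcomp C S _ _ _ (proj2_sig f) (proj2_sig g)))
    (fun a => exist _ (cdom (proj1_sig a)) (s_cdom C S _ (proj2_sig a)))
    (fun a => exist _ (ccod (proj1_sig a)) (s_ccod C S _ (proj2_sig a)))
    (fun h => exist _ (cid (proj1_sig h)) (s_cid C S _ (proj2_sig h)))
    (fun a b e => exist _ (ccomp (proj1_sig a) (proj1_sig b) (f_equal (@proj1_sig _ _) e))
                    (s_ccomp C S _ _ _ (proj2_sig a) (proj2_sig b)))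
    (fun h => exist _ (hsrc (proj1_sig h)) (s_hsrc C S _ (proj2_sig h)))
    (fun h => exist _ (htgt (proj1_sig h)) (s_htgt C S _ (proj2_sig h)))
    (fun a => exist _ (csrc (proj1_sig a)) (s_csrc C S _ (proj2_sig a)))
    (fun a => exist _ (ctgt (proj1_sig a)) (s_ctgt C S _ (proj2_sig a)))
    (fun x => exist _ (hunit (proj1_sig x)) (s_hunit C S _ (proj2_sig x)))
    (fun f => exist _ (cunit (proj1_sig f)) (s_cunit C S _ (proj2_sig f)))
    (fun h k e => exist _ (hcomp (proj1_sig h) (proj1_sig k) (f_equal (@proj1_sig _ _) e))
                    (s_hcomp C S _ _ _ (proj2_sig h) (proj2_sig k)))
    (fun a b e => exist _ (chcomp (proj1_sig a) (proj1_sig b) (f_equal (@proj1_sig _ _) e))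
                    (s_chcomp C S _ _ _ (proj2_sig a) (proj2_sig b)))
    (fun h k l p q => exist _ (assoc (proj1_sig h) (proj1_sig k) (proj1_sig l)
                                 (f_equal (@proj1_sig _ _) p) (f_equal (@proj1_sig _ _) q))
                        (s_assoc C S _ _ _ _ _ (proj2_sig h) (proj2_sig k) (proj2_sig l)))
    (fun h k l p q => exist _ (assoc_inv (proj1_sig h) (proj1_sig k) (proj1_sig l)
                                 (f_equal (@proj1_sig _ _) p) (f_equal (@proj1_sig _ _) q))
                        (s_assoc_inv C S _ _ _ _ _ (proj2_sig h) (proj2_sig k) (proj2_sig l)))
    (fun h => exist _ (lunit (proj1_sig h)) (s_lunit C S _ (proj2_sig h)))
    (fun h => exist _ (lunit_inv (proj1_sig h)) (s_lunit_inv C S _ (proj2_sig h)))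
    (fun h => exist _ (runit (proj1_sig h)) (s_runit C S _ (proj2_sig h)))
    (fun h => exist _ (runit_inv (proj1_sig h)) (s_runit_inv C S _ (proj2_sig h))).

Definition gammaDC (C : DC) : DC := sub_DC C (gammaSub C).

Definition eps (C : DC) : DF (gammaDC C) C :=
  mkDF (gammaDC C) C
    (fun x => proj1_sig x) (fun f => proj1_sig f) (fun h => proj1_sig h) (fun a => proj1_sig a)
    (fun x => cid (hunit (proj1_sig x)))
    (fun h k e => cid (hcomp (proj1_sig h) (proj1_sig k) (f_equal (@proj1_sig _ _) e))).

Definition globgen (D : DC) : Prop :=
  (forall x, sO (gammaSub D) x) /\ (forall f, sV (gammaSub D) f) /\
  (forall h, sH (gammaSub D) h) /\ (forall a, sC (gammaSub D) a).

From Pilot Require Import Defs.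
From Stdlib Require Import ProofIrrelevance ClassicalEpsilon FunctionalExtensionality.

(* A double functor F : D -> C from a globularily generated D lands in gamma C: the
   cells of D whose image lies in gamma C form a complete sub-double category of D
   containing the globular cells.  The only non-obvious closure properties are those
   under [cunit] and horizontal composition; by naturality of the comparison cells of F,
   F(U_f) and F(a b) are conjugate, via globular isomorphisms (whose inverses are
   globular again), to cells built from cells already in gamma C.  The factorization is
   unique because eps is injective on every kind of arrow.
   gamma C is itself globularily generated (the cells underlying an admissible
   sub-double category of gamma C form an admissible sub-double category of C), so any
   (E, e) with the same universal property yields G : gamma C -> E with e G = eps.  With
   phi the factorization of e, eps (phi G) = eps forces phi G = id, and e (G phi) = e
   forces G phi = id by the uniqueness clause for E. *)

(* The partial compositions of [Defs] take composability proofs as arguments.  To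
   rewrite freely we replace them by total operations, returning a junk value on
   non-composable input; by proof irrelevance they agree with the partial ones. *)
Definition total {P : Prop} {B : Type} (f : P -> B) (d : B) : B :=
  match excluded_middle_informative P with left p => f p | right _ => d end.

Lemma total_eq {P : Prop} {B : Type} (f : P -> B) (d : B) (p : P) : total f d = f p.
Proof.
  unfold total; destruct excluded_middle_informative as [p'|np]; [|contradiction].
  f_equal; apply proof_irrelevance.
Qed.

Section Total.
Context {C : DC}.

Definition vcompT (f g : VM C) : VM C := total (vcomp f g) f.
Definition ccompT (a b : Cell C) : Cell C := total (ccomp a b) a.
Definition hcompT (h k : HM C) : HM C := total (hcomp h k) h.
Definition chcompT (a b : Cell C) : Cell C := total (chcomp a b) a.
Definition assocT (h k l : HM C) : Cell C :=
  total (fun p => total (assoc h k l p) (cid h)) (cid h).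

Lemma vcompTE f g e : vcomp f g e = vcompT f g.
Proof. symmetry; apply total_eq. Qed.
Lemma ccompTE a b e : ccomp a b e = ccompT a b.
Proof. symmetry; apply total_eq. Qed.
Lemma hcompTE h k e : hcomp h k e = hcompT h k.
Proof. symmetry; apply total_eq. Qed.
Lemma chcompTE a b e : chcomp a b e = chcompT a b.
Proof. symmetry; apply total_eq. Qed.
Lemma assocTE h k l p q : assoc h k l p q = assocT h k l.
Proof. unfold assocT; rewrite (total_eq _ _ p); symmetry; apply total_eq. Qed.

End Total.

Definition fMT {C D : DC} (F : DF C D) (h k : HM C) : Cell D :=
  total (fM F h k) (cid (fH F h)).

Lemma fMTE {C D : DC} (F : DF C D) h k e : fM F h k e = fMT F h k.
Proof. symmetry; apply total_eq. Qed.

Ltac totalize1 := match goal with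
 | |- context [vcomp ?f ?g ?e] => rewrite (vcompTE f g e)
 | |- context [ccomp ?a ?b ?e] => rewrite (ccompTE a b e)
 | |- context [hcomp ?a ?b ?e] => rewrite (hcompTE a b e)
 | |- context [chcomp ?a ?b ?e] => rewrite (chcompTE a b e)
 | |- context [assoc ?h ?k ?l ?p ?q] => rewrite (assocTE h k l p q)
 | |- context [fM ?F ?h ?k ?e] => rewrite (fMTE F h k e)
 end.
Ltac totalize := repeat totalize1.

Ltac totalize_in1 H := match type of H with
 | context [vcomp ?f ?g ?e] => rewrite (vcompTE f g e) in H
 | context [ccomp ?a ?b ?e] => rewrite (ccompTE a b e) in H
 | context [hcomp ?a ?b ?e] => rewrite (hcompTE a b e) in H
 | context [chcomp ?a ?b ?e] => rewrite (chcompTE a b e) in H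
 | context [assoc ?h ?k ?l ?p ?q] => rewrite (assocTE h k l p q) in H
 | context [fM ?F ?h ?k ?e] => rewrite (fMTE F h k e) in H
 end.
Ltac totalize_in H := repeat (totalize_in1 H).

Create HintDb bdry. Create HintDb bdry_h. Create HintDb bdry_v.

(* Solver for the boundary equations (composability side conditions).  The four
   axioms relating [csrc]/[ctgt] to [cdom]/[ccod] are tried in both orientations. *)
Ltac boundary := first
  [ assumption | reflexivity
  | autorewrite with bdry bdry_h; first [reflexivity | congruence]
  | autorewrite with bdry bdry_v; first [reflexivity | congruence] ].

(* Use an axiom [L] whose composability arguments are left as holes: they are
   discharged by [boundary] after both sides are put in total form. *)
Tactic Notation "from_axiom" uconstr(L) :=
  let HL := fresh "HL" in
  unshelve epose proof L as HL;
  [ .. | totalize_in HL; totalize; first [exact HL | exact (eq_sym HL)] ];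
  totalize; boundary.

Section TotalBoundaries.
Context {C : DC} (HC : isDC C).

Lemma vcompT_dom (f g : VM C) : vcod f = vdom g -> vdom (vcompT f g) = vdom f.
Proof. intro e; rewrite <- (vcompTE f g e); apply (vcomp_dom _ HC). Qed.
Lemma vcompT_cod (f g : VM C) : vcod f = vdom g -> vcod (vcompT f g) = vcod g.
Proof. intro e; rewrite <- (vcompTE f g e); apply (vcomp_cod _ HC). Qed.
Lemma ccompT_dom (a b : Cell C) : ccod a = cdom b -> cdom (ccompT a b) = cdom a.
Proof. intro e; rewrite <- (ccompTE a b e); apply (ccomp_dom _ HC). Qed.
Lemma ccompT_cod (a b : Cell C) : ccod a = cdom b -> ccod (ccompT a b) = ccod b.
Proof. intro e; rewrite <- (ccompTE a b e); apply (ccomp_cod _ HC). Qed.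
Lemma hcompT_src (h k : HM C) : htgt h = hsrc k -> hsrc (hcompT h k) = hsrc h.
Proof. intro e; rewrite <- (hcompTE h k e); apply (hsrc_hcomp _ HC). Qed.
Lemma hcompT_tgt (h k : HM C) : htgt h = hsrc k -> htgt (hcompT h k) = htgt k.
Proof. intro e; rewrite <- (hcompTE h k e); apply (htgt_hcomp _ HC). Qed.
Lemma chcompT_src (a b : Cell C) : ctgt a = csrc b -> csrc (chcompT a b) = csrc a.
Proof. intro e; rewrite <- (chcompTE a b e); apply (csrc_chcomp _ HC). Qed.
Lemma chcompT_tgt (a b : Cell C) : ctgt a = csrc b -> ctgt (chcompT a b) = ctgt b.
Proof. intro e; rewrite <- (chcompTE a b e); apply (ctgt_chcomp _ HC). Qed.

End TotalBoundaries.

#[export] Hint Rewrite @vcompT_dom @vcompT_cod @ccompT_dom @ccompT_cod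
  @hcompT_src @hcompT_tgt @chcompT_src @chcompT_tgt using boundary : bdry.
#[export] Hint Rewrite @vid_dom @vid_cod @cid_dom @cid_cod @csrc_id @ctgt_id
  @cunit_dom @cunit_cod @hsrc_unit @htgt_unit @csrc_unit @ctgt_unit
  @lunit_cod @lunit_src @lunit_tgt @lunit_inv_dom @lunit_inv_src @lunit_inv_tgt
  @runit_cod @runit_src @runit_tgt @runit_inv_dom @runit_inv_src @runit_inv_tgt
  using boundary : bdry.
#[export] Hint Rewrite @csrc_dom @csrc_cod @ctgt_dom @ctgt_cod using boundary : bdry_h.
#[export] Hint Rewrite <- @csrc_dom @csrc_cod @ctgt_dom @ctgt_cod using boundary : bdry_v.

Section TotalLaws.
Context {C : DC} (HC : isDC C).

Lemma vcompT_idr (f : VM C) x : vcod f = x -> vcompT f (vid x) = f.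
Proof. intros <-; from_axiom (vcomp_idr _ HC f _). Qed.
Lemma ccompT_idl (a : Cell C) h : cdom a = h -> ccompT (cid h) a = a.
Proof. intros <-; from_axiom (ccomp_idl _ HC a _). Qed.
Lemma ccompT_idr (a : Cell C) h : ccod a = h -> ccompT a (cid h) = a.
Proof. intros <-; from_axiom (ccomp_idr _ HC a _). Qed.
Lemma ccompT_assoc (a b c : Cell C) : ccod a = cdom b -> ccod b = cdom c ->
  ccompT (ccompT a b) c = ccompT a (ccompT b c).
Proof. intros e1 e2; from_axiom (ccomp_assoc _ HC a b c e1 _ e2 _). Qed.
Lemma csrc_ccompT (a b : Cell C) : ccod a = cdom b ->
  csrc (ccompT a b) = vcompT (csrc a) (csrc b).
Proof. intro e; from_axiom (csrc_comp _ HC a b e _). Qed.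
Lemma ctgt_ccompT (a b : Cell C) : ccod a = cdom b ->
  ctgt (ccompT a b) = vcompT (ctgt a) (ctgt b).
Proof. intro e; from_axiom (ctgt_comp _ HC a b e _). Qed.
Lemma cdom_chcompT (a b : Cell C) : ctgt a = csrc b ->
  cdom (chcompT a b) = hcompT (cdom a) (cdom b).
Proof. intro e; from_axiom (cdom_chcomp _ HC a b e _). Qed.
Lemma ccod_chcompT (a b : Cell C) : ctgt a = csrc b ->
  ccod (chcompT a b) = hcompT (ccod a) (ccod b).
Proof. intro e; from_axiom (ccod_chcomp _ HC a b e _). Qed.

End TotalLaws.

#[export] Hint Rewrite @vcompT_idr @csrc_ccompT @ctgt_ccompT
  @cdom_chcompT @ccod_chcompT @cunit_id using boundary : bdry.

Section HorizontalStructure.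
Context {C : DC} (HC : isDC C).

Lemma chcompT_id (h k : HM C) : htgt h = hsrc k -> chcompT (cid h) (cid k) = cid (hcompT h k).
Proof. intro e; from_axiom (chcomp_id _ HC h k e _). Qed.
Lemma interchangeT (a b a' b' : Cell C) : ctgt a = csrc b -> ctgt a' = csrc b' ->
  ccod a = cdom a' -> ccod b = cdom b' ->
  chcompT (ccompT a a') (ccompT b b') = ccompT (chcompT a b) (chcompT a' b').
Proof. intros e e' ea eb; from_axiom (interchange _ HC a b a' b' e e' ea eb _ _). Qed.
Lemma assocT_dom (h k l : HM C) : htgt h = hsrc k -> htgt k = hsrc l ->
  cdom (assocT h k l) = hcompT (hcompT h k) l.
Proof. intros p q; from_axiom (assoc_dom _ HC h k l p q _). Qed.
Lemma assocT_cod (h k l : HM C) : htgt h = hsrc k -> htgt k = hsrc l ->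
  ccod (assocT h k l) = hcompT h (hcompT k l).
Proof. intros p q; from_axiom (assoc_cod _ HC h k l p q _). Qed.
Lemma assocT_src (h k l : HM C) : htgt h = hsrc k -> htgt k = hsrc l ->
  csrc (assocT h k l) = vid (hsrc h).
Proof. intros p q; from_axiom (assoc_src _ HC h k l p q). Qed.
Lemma assocT_tgt (h k l : HM C) : htgt h = hsrc k -> htgt k = hsrc l ->
  ctgt (assocT h k l) = vid (htgt l).
Proof. intros p q; from_axiom (assoc_tgt _ HC h k l p q). Qed.
Lemma lunit_domT (h : HM C) : cdom (lunit h) = hcompT (hunit (hsrc h)) h.
Proof. from_axiom (lunit_dom _ HC h _). Qed.
Lemma runit_domT (h : HM C) : cdom (runit h) = hcompT h (hunit (htgt h)).
Proof. from_axiom (runit_dom _ HC h _). Qed.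

End HorizontalStructure.

#[export] Hint Rewrite @assocT_dom @assocT_cod @assocT_src @assocT_tgt
  @lunit_domT @runit_domT using boundary : bdry.

#[export] Hint Rewrite @fV_dom @fV_cod @fV_id @fC_dom @fC_cod @fC_id @fH_src @fH_tgt
  @fC_src @fC_tgt @fU_dom @fU_cod @fU_src @fU_tgt using boundary : bdry.

Section FunctorBoundaries.
Context {C D : DC} (F : DF C D) (HF : isDF F).

Lemma fV_vcompT (f g : VM C) : vcod f = vdom g -> fV F (vcompT f g) = vcompT (fV F f) (fV F g).
Proof. intro e; from_axiom (fV_comp _ HF f g e _). Qed.
Lemma fC_ccompT (a b : Cell C) : ccod a = cdom b -> fC F (ccompT a b) = ccompT (fC F a) (fC F b).
Proof. intro e; from_axiom (fC_comp _ HF a b e _). Qed.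
Lemma fMT_dom (h k : HM C) : htgt h = hsrc k -> cdom (fMT F h k) = hcompT (fH F h) (fH F k).
Proof. intro e; from_axiom (fM_dom _ HF h k e _). Qed.
Lemma fMT_cod (h k : HM C) : htgt h = hsrc k -> ccod (fMT F h k) = fH F (hcompT h k).
Proof. intro e; from_axiom (fM_cod _ HF h k e). Qed.
Lemma fMT_src (h k : HM C) : htgt h = hsrc k -> csrc (fMT F h k) = vid (fO F (hsrc h)).
Proof. intro e; from_axiom (fM_src _ HF h k e). Qed.
Lemma fMT_tgt (h k : HM C) : htgt h = hsrc k -> ctgt (fMT F h k) = vid (fO F (htgt k)).
Proof. intro e; from_axiom (fM_tgt _ HF h k e). Qed.

End FunctorBoundaries.

#[export] Hint Rewrite @fMT_dom @fMT_cod @fMT_src @fMT_tgt @fV_vcompT @fC_ccompT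
  using boundary : bdry.

Section FunctorLaws.
Context {C D : DC} (HC : isDC C) (HD : isDC D) (F : DF C D) (HF : isDF F).

Lemma fU_natT (f : VM C) x y : vdom f = x -> vcod f = y ->
  ccompT (cunit (fV F f)) (fU F y) = ccompT (fU F x) (fC F (cunit f)).
Proof. intros <- <-; from_axiom (fU_nat _ HF f _ _). Qed.

Lemma fM_natT (a b : Cell C) ha hb ka kb : ctgt a = csrc b ->
  cdom a = ha -> cdom b = hb -> ccod a = ka -> ccod b = kb ->
  ccompT (chcompT (fC F a) (fC F b)) (fMT F ka kb)
  = ccompT (fMT F ha hb) (fC F (chcompT a b)).
Proof. intros e <- <- <- <-; from_axiom (fM_nat _ HF a b e _ _ _ _ _). Qed.

Lemma fM_natT_idr (a : Cell C) h ha ka : ctgt a = vid (hsrc h) -> cdom a = ha -> ccod a = ka ->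
  ccompT (chcompT (fC F a) (cid (fH F h))) (fMT F ka h)
  = ccompT (fMT F ha h) (fC F (chcompT a (cid h))).
Proof. intros e ea ea'; rewrite <- (fC_id _ HF); apply fM_natT; boundary. Qed.

Lemma fM_natT_idl (b : Cell C) h hb kb : csrc b = vid (htgt h) -> cdom b = hb -> ccod b = kb ->
  ccompT (chcompT (cid (fH F h)) (fC F b)) (fMT F h kb)
  = ccompT (fMT F h hb) (fC F (chcompT (cid h) b)).
Proof. intros e eb eb'; rewrite <- (fC_id _ HF); apply fM_natT; boundary. Qed.

Lemma fM_assocT (h k l : HM C) : htgt h = hsrc k -> htgt k = hsrc l ->
  ccompT (chcompT (fMT F h k) (cid (fH F l))) (ccompT (fMT F (hcompT h k) l) (fC F (assocT h k l)))
  = ccompT (assocT (fH F h) (fH F k) (fH F l))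
      (ccompT (chcompT (cid (fH F h)) (fMT F k l)) (fMT F h (hcompT k l))).
Proof.
  intros p q; rewrite <- !(ccompT_assoc HD) by boundary.
  from_axiom (fM_assoc _ HF h k l p q _ _ _ _ _ _ _ _ _ _).
Qed.

Lemma fU_lunitT (h : HM C) x : hsrc h = x ->
  ccompT (chcompT (fU F x) (cid (fH F h))) (ccompT (fMT F (hunit x) h) (fC F (lunit h)))
  = lunit (fH F h).
Proof.
  intros <-; rewrite <- !(ccompT_assoc HD) by boundary.
  from_axiom (fU_lunit _ HF h _ _ _ _).
Qed.

Lemma fU_runitT (h : HM C) x : htgt h = x ->
  ccompT (chcompT (cid (fH F h)) (fU F x)) (ccompT (fMT F h (hunit x)) (fC F (runit h)))
  = runit (fH F h).
Proof.
  intros <-; rewrite <- !(ccompT_assoc HD) by boundary.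
  from_axiom (fU_runit _ HF h _ _ _ _).
Qed.

End FunctorLaws.

Lemma is_isoT {C : DC} (a : Cell C) : is_iso a <->
  exists b, ccod a = cdom b /\ ccod b = cdom a /\
            ccompT a b = cid (cdom a) /\ ccompT b a = cid (ccod a).
Proof.
  split.
  - intros (b & e1 & e2 & H1 & H2); exists b; totalize_in H1; totalize_in H2; auto.
  - intros (b & e1 & e2 & H1 & H2); exists b, e1, e2; totalize; auto.
Qed.

Section CellCalculus.
Context {C : DC} (HC : isDC C).

Lemma ccompT_assoc_postcomp (a b a' b' c : Cell C) : ccompT a b = ccompT a' b' ->
  ccod a = cdom b -> ccod b = cdom c -> ccod a' = cdom b' -> ccod b' = cdom c ->
  ccompT a (ccompT b c) = ccompT a' (ccompT b' c).
Proof.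
  intros E e1 e2 e3 e4; rewrite <- (ccompT_assoc HC) by boundary.
  rewrite E; apply (ccompT_assoc HC); boundary.
Qed.

Lemma ccompT_assoc_postcomp3 (a b c a' b' c' d : Cell C) :
  ccompT a (ccompT b c) = ccompT a' (ccompT b' c') ->
  ccod a = cdom b -> ccod b = cdom c -> ccod c = cdom d ->
  ccod a' = cdom b' -> ccod b' = cdom c' -> ccod c' = cdom d ->
  ccompT a (ccompT b (ccompT c d)) = ccompT a' (ccompT b' (ccompT c' d)).
Proof.
  intros E e1 e2 e3 e4 e5 e6.
  rewrite <- (ccompT_assoc HC b c d), <- (ccompT_assoc HC a) by boundary.
  rewrite E, (ccompT_assoc HC a'), (ccompT_assoc HC b') by boundary; reflexivity.
Qed.

Lemma chcompT_ccompT_idr (a b : Cell C) h :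
  ccod a = cdom b -> ctgt a = vid (hsrc h) -> ctgt b = vid (hsrc h) ->
  chcompT (ccompT a b) (cid h) = ccompT (chcompT a (cid h)) (chcompT b (cid h)).
Proof.
  intros e ea eb; rewrite <- (interchangeT HC) by boundary.
  rewrite (ccompT_idl HC (cid h) h) by boundary; reflexivity.
Qed.

Lemma chcompT_ccompT_idl (a b : Cell C) h :
  ccod a = cdom b -> csrc a = vid (htgt h) -> csrc b = vid (htgt h) ->
  chcompT (cid h) (ccompT a b) = ccompT (chcompT (cid h) a) (chcompT (cid h) b).
Proof.
  intros e ea eb; rewrite <- (interchangeT HC) by boundary.
  rewrite (ccompT_idl HC (cid h) h) by boundary; reflexivity.
Qed.

End CellCalculus.

Section Isos.
Context {C : DC} (HC : isDC C).

Lemma is_iso_cid (h : HM C) : is_iso (cid h).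
Proof.
  apply is_isoT; exists (cid h); repeat split; try boundary;
    rewrite (ccompT_idl HC) by boundary; boundary.
Qed.

Lemma is_iso_ccompT (a b : Cell C) : ccod a = cdom b -> is_iso a -> is_iso b -> is_iso (ccompT a b).
Proof.
  rewrite !is_isoT; intros e (a' & ea1 & ea2 & Ha1 & Ha2) (b' & eb1 & eb2 & Hb1 & Hb2).
  exists (ccompT b' a'); repeat split; try boundary.
  - rewrite (ccompT_assoc HC), <- (ccompT_assoc HC b b' a') by boundary.
    rewrite Hb1, (ccompT_idl HC), Ha1 by boundary; f_equal; boundary.
  - rewrite (ccompT_assoc HC), <- (ccompT_assoc HC a' a b) by boundary.
    rewrite Ha2, (ccompT_idl HC), Hb2 by boundary; f_equal; boundary.
Qed.

End Isos.

Lemma is_iso_fC {C D : DC} (HC : isDC C) (HD : isDC D) (F : DF C D) (HF : isDF F)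
  (a : Cell C) : is_iso a -> is_iso (fC F a).
Proof.
  rewrite !is_isoT; intros (a' & e1 & e2 & H1 & H2); exists (fC F a').
  repeat split; try boundary; rewrite <- (fC_ccompT F HF) by boundary.
  - rewrite H1; boundary.
  - rewrite H2; boundary.
Qed.

Lemma is_iso_fMT {C D : DC} (F : DF C D) (HF : isDF F) h k :
  htgt h = hsrc k -> is_iso (fMT F h k).
Proof. intro e; rewrite <- (fMTE F h k e); apply (fM_iso _ HF). Qed.

(** * Composition of double functors *)

Section Composite.
Context {C D E : DC} (G : DF D E) (H : DF C D).

Definition compU (x : Ob C) : Cell E := ccompT (fU G (fO H x)) (fC G (fU H x)).
Definition compM (h k : HM C) : Cell E :=
  ccompT (fMT G (fH H h) (fH H k)) (fC G (fMT H h k)).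

Definition DFcomp : DF C E :=
  mkDF C E (fun x => fO G (fO H x)) (fun f => fV G (fV H f)) (fun h => fH G (fH H h))
    (fun a => fC G (fC H a)) compU (fun h k _ => compM h k).

Lemma DFcomp_eq_self : DFcomp_eq G H DFcomp.
Proof. repeat split; intros; cbn; totalize; reflexivity. Qed.

Context (HC : isDC C) (HD : isDC D) (HE : isDC E) (HG : isDF G) (HH : isDF H).

Lemma compU_nat (f : VM C) :
  ccompT (cunit (fV G (fV H f))) (compU (vcod f)) = ccompT (compU (vdom f)) (fC G (fC H (cunit f))).
Proof.
  unfold compU; rewrite <- (ccompT_assoc HE) by boundary.
  rewrite (fU_natT HD HE G HG (fV H f) (fO H (vdom f)) (fO H (vcod f))) by boundary.
  rewrite (ccompT_assoc HE), <- (fC_ccompT G HG) by boundary.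
  rewrite (fU_natT HC HD H HH f _ _ eq_refl eq_refl).
  rewrite (fC_ccompT G HG), (ccompT_assoc HE) by boundary; reflexivity.
Qed.

Lemma compM_nat (a b : Cell C) : ctgt a = csrc b ->
  ccompT (chcompT (fC G (fC H a)) (fC G (fC H b))) (compM (ccod a) (ccod b))
  = ccompT (compM (cdom a) (cdom b)) (fC G (fC H (chcompT a b))).
Proof.
  intro e; unfold compM; rewrite <- (ccompT_assoc HE) by boundary.
  rewrite (fM_natT HD HE G HG (fC H a) (fC H b) (fH H (cdom a)) (fH H (cdom b))) by boundary.
  rewrite (ccompT_assoc HE), <- (fC_ccompT G HG) by boundary.
  rewrite (fM_natT HC HD H HH a b _ _ _ _ e eq_refl eq_refl eq_refl eq_refl).
  rewrite (fC_ccompT G HG), (ccompT_assoc HE) by boundary; reflexivity.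
Qed.

Lemma compM_assoc (h k l : HM C) : htgt h = hsrc k -> htgt k = hsrc l ->
  ccompT (chcompT (compM h k) (cid (fH G (fH H l))))
    (ccompT (compM (hcompT h k) l) (fC G (fC H (assocT h k l))))
  = ccompT (assocT (fH G (fH H h)) (fH G (fH H k)) (fH G (fH H l)))
      (ccompT (chcompT (cid (fH G (fH H h))) (compM k l)) (compM h (hcompT k l))).
Proof.
  intros p q; unfold compM.
  rewrite (chcompT_ccompT_idr HE), (chcompT_ccompT_idl HE) by boundary.
  repeat rewrite (ccompT_assoc HE) by boundary.
  rewrite (ccompT_assoc_postcomp HE _ _ _ _ _ (fM_natT_idr HD HE G HG (fMT H h k) (fH H l)
    (hcompT (fH H h) (fH H k)) (fH H (hcompT h k)) ltac:(boundary) ltac:(boundary) ltac:(boundary)))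
    by boundary.
  rewrite <- (fC_ccompT G HG (fMT H (hcompT h k) l) (fC H (assocT h k l))) by boundary.
  rewrite <- (fC_ccompT G HG (chcompT (fMT H h k) (cid (fH H l)))) by boundary.
  rewrite (fM_assocT HC HD H HH h k l p q), !(fC_ccompT G HG) by boundary.
  rewrite (ccompT_assoc_postcomp3 HE _ _ _ _ _ _ _ (fM_assocT HD HE G HG (fH H h) (fH H k) (fH H l)
    ltac:(boundary) ltac:(boundary))) by boundary.
  rewrite (ccompT_assoc_postcomp HE _ _ _ _ _ (eq_sym (fM_natT_idl HD HE G HG (fMT H k l) (fH H h)
    (hcompT (fH H k) (fH H l)) (fH H (hcompT k l)) ltac:(boundary) ltac:(boundary) ltac:(boundary))))
    by boundary.
  reflexivity.
Qed.

Lemma compU_lunit (h : HM C) :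
  ccompT (chcompT (compU (hsrc h)) (cid (fH G (fH H h))))
    (ccompT (compM (hunit (hsrc h)) h) (fC G (fC H (lunit h))))
  = lunit (fH G (fH H h)).
Proof.
  unfold compU, compM; rewrite (chcompT_ccompT_idr HE) by boundary.
  repeat rewrite (ccompT_assoc HE) by boundary.
  rewrite (ccompT_assoc_postcomp HE _ _ _ _ _ (fM_natT_idr HD HE G HG (fU H (hsrc h)) (fH H h)
    (hunit (fO H (hsrc h))) (fH H (hunit (hsrc h))) ltac:(boundary) ltac:(boundary) ltac:(boundary)))
    by boundary.
  rewrite <- (fC_ccompT G HG (fMT H (hunit (hsrc h)) h) (fC H (lunit h))) by boundary.
  rewrite <- (fC_ccompT G HG (chcompT (fU H (hsrc h)) (cid (fH H h)))) by boundary.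
  rewrite (fU_lunitT HC HD H HH h _ eq_refl).
  apply (fU_lunitT HD HE G HG); boundary.
Qed.

Lemma compU_runit (h : HM C) :
  ccompT (chcompT (cid (fH G (fH H h))) (compU (htgt h)))
    (ccompT (compM h (hunit (htgt h))) (fC G (fC H (runit h))))
  = runit (fH G (fH H h)).
Proof.
  unfold compU, compM; rewrite (chcompT_ccompT_idl HE) by boundary.
  repeat rewrite (ccompT_assoc HE) by boundary.
  rewrite (ccompT_assoc_postcomp HE _ _ _ _ _ (fM_natT_idl HD HE G HG (fU H (htgt h)) (fH H h)
    (hunit (fO H (htgt h))) (fH H (hunit (htgt h))) ltac:(boundary) ltac:(boundary) ltac:(boundary)))
    by boundary.
  rewrite <- (fC_ccompT G HG (fMT H h (hunit (htgt h))) (fC H (runit h))) by boundary.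
  rewrite <- (fC_ccompT G HG (chcompT (cid (fH H h)) (fU H (htgt h)))) by boundary.
  rewrite (fU_runitT HC HD H HH h _ eq_refl).
  apply (fU_runitT HD HE G HG); boundary.
Qed.

End Composite.

Lemma DFcomp_isDF {C D E : DC} (HC : isDC C) (HD : isDC D) (HE : isDC E)
  (G : DF D E) (HG : isDF G) (H : DF C D) (HH : isDF H) : isDF (DFcomp G H).
Proof.
  constructor; intros; cbn [fO fV fH fC fU fM DFcomp]; totalize;
    try (unfold compU, compM; boundary).
  - unfold compU; apply (is_iso_ccompT HE); [boundary | apply (fU_iso _ HG) |].
    apply (is_iso_fC HD HE G HG), (fU_iso _ HH).
  - apply (compU_nat _ _ HC HD HE HG HH).
  - unfold compM; apply (is_iso_ccompT HE); [boundary | apply (is_iso_fMT G HG); boundary |].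
    apply (is_iso_fC HD HE G HG), (is_iso_fMT H HH); boundary.
  - apply (compM_nat _ _ HC HD HE HG HH _ _ e).
  - rewrite !(ccompT_assoc HE) by (unfold compM; boundary).
    apply (compM_assoc _ _ HC HD HE HG HH); boundary.
  - rewrite (ccompT_assoc HE) by (unfold compU, compM; boundary).
    apply (compU_lunit _ _ HC HD HE HG HH).
  - rewrite (ccompT_assoc HE) by (unfold compU, compM; boundary).
    apply (compU_runit _ _ HC HD HE HG HH).
Qed.

Lemma DF_id_isDF {C : DC} (HC : isDC C) : isDF (DF_id C).
Proof.
  constructor; intros; cbn; totalize; try boundary;
    rewrite ?(chcompT_id HC), ?(ccompT_idl HC), ?(ccompT_idr HC) by boundary;
    try reflexivity; apply (is_iso_cid HC).
Qed.

Lemma DFcomp_eq_id_r {C E : DC} (HC : isDC C) (F : DF E C) (HF : isDF F) :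
  DFcomp_eq F (DF_id E) F.
Proof.
  repeat split; intros; cbn; try reflexivity; totalize;
    rewrite (fC_id _ HF); apply (ccompT_idr HC); boundary.
Qed.

(** * The globularily generated piece *)

Lemma sig_eq {A : Type} {P : A -> Prop} (u v : {a : A | P a}) :
  proj1_sig u = proj1_sig v -> u = v.
Proof. apply eq_sig_hprop; intros; apply proof_irrelevance. Qed.

Lemma sub_isDC {C : DC} (HC : isDC C) (S : SubDC C) : isDC (sub_DC C S).
Proof. destruct HC; constructor; intros; apply sig_eq; cbn; eauto. Qed.

Lemma eps_isDF {C : DC} (HC : isDC C) : isDF (eps C).
Proof.
  (* Composability in [gamma C] is equality in a subset type; [boundary] needs the
     underlying equations in [C]. *)
  constructor; intros; cbn; totalize;
    repeat match goal with E : ?u = ?v |- _ =>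
      lazymatch goal with
      | _ : proj1_sig u = proj1_sig v |- _ => fail
      | _ => pose proof (f_equal (@proj1_sig _ _) E) end end;
    cbn in *;
    try boundary;
    rewrite ?(chcompT_id HC), ?(ccompT_idl HC), ?(ccompT_idr HC) by boundary;
    try reflexivity; apply (is_iso_cid HC).
Qed.

Section Gamma.
Context (C : DC).

Lemma gamma_ob x : sO (gammaSub C) x.
Proof. intros S [[H _] _]; apply H. Qed.
Lemma gamma_vm f : sV (gammaSub C) f.
Proof. intros S [[_ [H _]] _]; apply H. Qed.
Lemma gamma_hm h : sH (gammaSub C) h.
Proof. intros S [[_ [_ H]] _]; apply H. Qed.
Lemma gamma_globular a : globular a -> sC (gammaSub C) a.
Proof. intros Hg S [_ H]; apply H, Hg. Qed.

Let obG x : Ob (gammaDC C) := exist _ x (gamma_ob x).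
Let vmG f : VM (gammaDC C) := exist _ f (gamma_vm f).
Let hmG h : HM (gammaDC C) := exist _ h (gamma_hm h).

Definition underlying_sub (S : SubDC (gammaDC C)) (HS : gadm S) : SubDC C.
Proof.
  pose proof (proj2 (proj2 (proj1 HS))) as HH; pose proof (proj1 (proj2 (proj1 HS))) as HV.
  refine (Build_SubDC C (fun _ => True) (fun _ => True) (fun _ => True)
    (fun a => exists c : Cell (gammaDC C), proj1_sig c = a /\ sC S c)
    _ _ _ _ _ _ _ _ _ _ _ _ _ _ _ _ _ _ _ _ _ _); intros; try exact I.
  - exists (@cid (gammaDC C) (hmG h)); split; [reflexivity | apply s_cid, HH].
  - destruct H as [c [<- Hc]], H0 as [d [<- Hd]].
    exists (@ccomp (gammaDC C) c d (sig_eq (ccod c) (cdom d) e)).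
    split; [cbn; f_equal; apply proof_irrelevance | apply s_ccomp; auto].
  - exists (@cunit (gammaDC C) (vmG f)); split; [reflexivity | apply s_cunit, HV].
  - destruct H as [c [<- Hc]], H0 as [d [<- Hd]].
    exists (@chcomp (gammaDC C) c d (sig_eq (ctgt c) (csrc d) e)).
    split; [cbn; f_equal; apply proof_irrelevance | apply s_chcomp; auto].
  - exists (@assoc (gammaDC C) (hmG h) (hmG k) (hmG l)
      (sig_eq (@htgt (gammaDC C) (hmG h)) (@hsrc (gammaDC C) (hmG k)) p)
      (sig_eq (@htgt (gammaDC C) (hmG k)) (@hsrc (gammaDC C) (hmG l)) q)).
    split; [cbn; f_equal; apply proof_irrelevance | apply s_assoc; apply HH].
  - exists (@assoc_inv (gammaDC C) (hmG h) (hmG k) (hmG l)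
      (sig_eq (@htgt (gammaDC C) (hmG h)) (@hsrc (gammaDC C) (hmG k)) p)
      (sig_eq (@htgt (gammaDC C) (hmG k)) (@hsrc (gammaDC C) (hmG l)) q)).
    split; [cbn; f_equal; apply proof_irrelevance | apply s_assoc_inv; apply HH].
  - exists (@lunit (gammaDC C) (hmG h)); split; [reflexivity | apply s_lunit, HH].
  - exists (@lunit_inv (gammaDC C) (hmG h)); split; [reflexivity | apply s_lunit_inv, HH].
  - exists (@runit (gammaDC C) (hmG h)); split; [reflexivity | apply s_runit, HH].
  - exists (@runit_inv (gammaDC C) (hmG h)); split; [reflexivity | apply s_runit_inv, HH].
Defined.

Lemma underlying_sub_gadm (S : SubDC (gammaDC C)) (HS : gadm S) : gadm (underlying_sub S HS).
Proof.
  split; [repeat split; intros; exact I |].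
  intros a [[x Hx] [y Hy]].
  exists (exist _ a (gamma_globular a (conj (ex_intro _ x Hx) (ex_intro _ y Hy)))).
  split; [reflexivity | apply (proj2 HS)].
  split; [exists (obG x) | exists (obG y)]; apply sig_eq; assumption.
Qed.

Lemma gamma_globgen : globgen (gammaDC C).
Proof.
  repeat split; intros z S HS; try apply (proj1 HS).
  destruct (proj2_sig z _ (underlying_sub_gadm S HS)) as [c [Ec Hc]].
  replace z with c by (apply sig_eq; exact Ec); exact Hc.
Qed.

End Gamma.

(** * Factoring through [gamma C] *)

Section GlobularCells.
Context {C : DC} (HC : isDC C).

Lemma globular_inverse (a b : Cell C) : globular a -> ccod a = cdom b -> ccod b = cdom a ->
  ccompT b a = cid (ccod a) -> globular b.
Proof.
  intros [[x Hx] [y Hy]] e1 e2 Hba; split.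
  - exists (hsrc (ccod a)); rewrite <- (csrc_id _ HC), <- Hba, (csrc_ccompT HC), Hx by boundary.
    symmetry; apply (vcompT_idr HC).
    rewrite (csrc_cod _ HC), e2, <- (csrc_dom _ HC), Hx; apply (vid_dom _ HC).
  - exists (htgt (ccod a)); rewrite <- (ctgt_id _ HC), <- Hba, (ctgt_ccompT HC), Hy by boundary.
    symmetry; apply (vcompT_idr HC).
    rewrite (ctgt_cod _ HC), e2, <- (ctgt_dom _ HC), Hy; apply (vid_dom _ HC).
Qed.

Lemma gamma_inverse (a : Cell C) : globular a -> is_iso a ->
  exists b, sC (gammaSub C) b /\ ccod a = cdom b /\ ccod b = cdom a /\
            ccompT a b = cid (cdom a) /\ ccompT b a = cid (ccod a).
Proof.
  rewrite is_isoT; intros Ha (b & e1 & e2 & Hab & Hba); exists b.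
  repeat split; auto; apply gamma_globular; apply (globular_inverse a); auto.
Qed.

Lemma gamma_is_iso (a : Cell (gammaDC C)) :
  globular (proj1_sig a) -> is_iso (proj1_sig a) -> is_iso a.
Proof.
  intros Hg Hi; destruct (gamma_inverse _ Hg Hi) as (b & Hb & e1 & e2 & Hab & Hba).
  pose (b' := exist _ b Hb : Cell (gammaDC C)).
  exists b', (sig_eq (ccod a) (cdom b') e1), (sig_eq (ccod b') (cdom a) e2).
  split; apply sig_eq; cbn; totalize; assumption.
Qed.

End GlobularCells.

Section DoubleFunctorGlobular.
Context {C D : DC} (F : DF C D) (HF : isDF F).

Lemma globular_fC (a : Cell C) : globular a -> globular (fC F a).
Proof.
  intros [[x Hx] [y Hy]]; split.
  - exists (fO F x); rewrite (fC_src _ HF), Hx; apply (fV_id _ HF).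
  - exists (fO F y); rewrite (fC_tgt _ HF), Hy; apply (fV_id _ HF).
Qed.

Lemma globular_fU x : globular (fU F x).
Proof. split; eexists; [apply (fU_src _ HF) | apply (fU_tgt _ HF)]. Qed.

Lemma globular_fM h k e : globular (fM F h k e).
Proof. split; eexists; [apply (fM_src _ HF) | apply (fM_tgt _ HF)]. Qed.

End DoubleFunctorGlobular.

Lemma sC_ccompT {C : DC} (S : SubDC C) (a b : Cell C) :
  ccod a = cdom b -> sC S a -> sC S b -> sC S (ccompT a b).
Proof. intro e; rewrite <- (ccompTE a b e); apply s_ccomp. Qed.

Lemma sC_chcompT {C : DC} (S : SubDC C) (a b : Cell C) :
  ctgt a = csrc b -> sC S a -> sC S b -> sC S (chcompT a b).
Proof. intro e; rewrite <- (chcompTE a b e); apply s_chcomp. Qed.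

(* [y = i^-1 ; x ; j], and the inverse of a globular isomorphism is globular. *)
Lemma gamma_cancel_iso {C : DC} (HC : isDC C) (x j i y : Cell C) :
  globular i -> is_iso i -> ccod x = cdom j -> ccod i = cdom y ->
  ccompT x j = ccompT i y -> sC (gammaSub C) x -> sC (gammaSub C) j -> sC (gammaSub C) y.
Proof.
  intros Hg Hi exj eiy E Hx Hj.
  destruct (gamma_inverse HC i Hg Hi) as (u & Hu & e1 & e2 & _ & Hui).
  assert (exu : cdom x = ccod u).
  { rewrite e2, <- (ccompT_dom HC i y), <- E by boundary; symmetry; apply (ccompT_dom HC); boundary. }
  replace y with (ccompT u (ccompT x j)).
  - apply sC_ccompT; [boundary | exact Hu | apply sC_ccompT; assumption].
  - rewrite E, <- (ccompT_assoc HC), Hui by boundary; apply (ccompT_idl HC); boundary.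
Qed.

Section PreimageGamma.
Context {C D : DC} (HC : isDC C) (HD : isDC D) (F : DF D C) (HF : isDF F).
Notation inGamma := (sC (gammaSub C)).

Lemma gamma_fC_globular (a : Cell D) : globular a -> inGamma (fC F a).
Proof. intro Ha; apply gamma_globular, (globular_fC F HF), Ha. Qed.

Lemma gamma_fC_cunit (f : VM D) : inGamma (fC F (cunit f)).
Proof.
  apply (gamma_cancel_iso HC (cunit (fV F f)) (fU F (vcod f)) (fU F (vdom f)));
    try boundary.
  - apply (globular_fU F HF).
  - apply (fU_iso _ HF).
  - apply (fU_natT HD HC F HF); reflexivity.
  - apply s_cunit, gamma_vm.
  - apply gamma_globular, (globular_fU F HF).
Qed.

Lemma gamma_fC_chcompT (a b : Cell D) : ctgt a = csrc b ->
  inGamma (fC F a) -> inGamma (fC F b) -> inGamma (fC F (chcompT a b)).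
Proof.
  intros e Ha Hb.
  assert (ed : htgt (cdom a) = hsrc (cdom b)) by boundary.
  assert (ec : htgt (ccod a) = hsrc (ccod b)) by boundary.
  apply (gamma_cancel_iso HC (chcompT (fC F a) (fC F b)) (fMT F (ccod a) (ccod b))
    (fMT F (cdom a) (cdom b))); try boundary.
  - rewrite <- (fMTE F _ _ ed); apply (globular_fM F HF).
  - apply (is_iso_fMT F HF); boundary.
  - apply (fM_natT HD HC F HF); auto.
  - apply sC_chcompT; auto; boundary.
  - rewrite <- (fMTE F _ _ ec); apply gamma_globular, (globular_fM F HF).
Qed.

Definition preimage_gamma : SubDC D.
Proof.
  refine (Build_SubDC D (fun _ => True) (fun _ => True) (fun _ => True) (fun a => inGamma (fC F a))
    _ _ _ _ _ _ _ _ _ _ _ _ _ _ _ _ _ _ _ _ _ _); intros; try exact I.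
  - rewrite (fC_id _ HF); apply s_cid, gamma_hm.
  - totalize; rewrite (fC_ccompT F HF) by boundary; apply sC_ccompT; auto; boundary.
  - apply gamma_fC_cunit.
  - totalize; apply gamma_fC_chcompT; auto.
  - apply gamma_fC_globular; split; eexists; [apply (assoc_src _ HD) | apply (assoc_tgt _ HD)].
  - apply gamma_fC_globular; split; eexists; [apply (assoc_inv_src _ HD) | apply (assoc_inv_tgt _ HD)].
  - apply gamma_fC_globular; split; eexists; [apply (lunit_src _ HD) | apply (lunit_tgt _ HD)].
  - apply gamma_fC_globular; split; eexists; [apply (lunit_inv_src _ HD) | apply (lunit_inv_tgt _ HD)].
  - apply gamma_fC_globular; split; eexists; [apply (runit_src _ HD) | apply (runit_tgt _ HD)].
  - apply gamma_fC_globular; split; eexists; [apply (runit_inv_src _ HD) | apply (runit_inv_tgt _ HD)].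
Defined.

Lemma preimage_gamma_gadm : gadm preimage_gamma.
Proof. split; [repeat split; intros; exact I | intros a Ha; apply gamma_fC_globular, Ha]. Qed.

End PreimageGamma.

Section GammaLift.
Context {C D : DC} (HC : isDC C) (HD : isDC D) (HgD : globgen D) (F : DF D C) (HF : isDF F).

(* Every cell of [D] lies in the admissible [preimage_gamma], as [D] is globularily generated. *)
Definition gamma_lift : DF D (gammaDC C) := mkDF D (gammaDC C)
  (fun x => exist _ (fO F x) (gamma_ob C _))
  (fun f => exist _ (fV F f) (gamma_vm C _))
  (fun h => exist _ (fH F h) (gamma_hm C _))
  (fun a => exist _ (fC F a) (proj2 (proj2 (proj2 HgD)) a _ (preimage_gamma_gadm HC HD F HF)))
  (fun x => exist _ (fU F x) (gamma_globular C _ (globular_fU F HF x)))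
  (fun h k e => exist _ (fM F h k e) (gamma_globular C _ (globular_fM F HF h k e))).

Lemma gamma_lift_isDF : isDF gamma_lift.
Proof.
  pose proof HF as [].
  constructor; intros; try (apply sig_eq; cbn; eauto; fail).
  - apply (gamma_is_iso HC); [apply (globular_fU F HF) | apply fU_iso].
  - apply (gamma_is_iso HC); [apply (globular_fM F HF) | apply fM_iso].
Qed.

Lemma eps_gamma_lift : DFcomp_eq (eps C) gamma_lift F.
Proof. repeat split; intros; cbn; totalize; try reflexivity; apply (ccompT_idl HC); boundary. Qed.

Lemma gamma_lift_unique (Ft : DF D (gammaDC C)) :
  isDF Ft -> DFcomp_eq (eps C) Ft F -> Ft = gamma_lift.
Proof.
  intros HFt (EO & EV & EH & EC & EU & EM).
  assert (Eu : forall x, proj1_sig (fU Ft x) = fU F x).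
  { intro x; pose proof (f_equal (@proj1_sig _ _) (fU_dom _ HFt x)) as Hd; cbn in Hd.
    rewrite <- (EU x (eq_trans (cid_cod _ HC _) (eq_sym Hd))); cbn; totalize.
    symmetry; apply (ccompT_idl HC); exact Hd. }
  assert (Em : forall h k e, proj1_sig (fM Ft h k e) = fM F h k e).
  { intros h k e.
    assert (e' : @htgt (gammaDC C) (fH Ft h) = @hsrc (gammaDC C) (fH Ft k)).
    { apply sig_eq; rewrite (fH_src _ HFt), (fH_tgt _ HFt), e; reflexivity. }
    pose proof (f_equal (@proj1_sig _ _) (fM_dom _ HFt h k e e')) as Hd; cbn in Hd.
    rewrite <- (EM h k e e' (eq_trans (cid_cod _ HC _) (eq_sym Hd))); cbn; totalize.
    symmetry; apply (ccompT_idl HC); totalize_in Hd; exact Hd. }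
  destruct Ft as [o v hm c u m]; cbn in *; unfold gamma_lift.
  f_equal; repeat (apply functional_extensionality_dep; intro); apply sig_eq; cbn; auto.
Qed.

End GammaLift.

(** * Uniqueness up to double isomorphism *)

Section Characterization.
Context {C E : DC} (HC : isDC C) (HE : isDC E) (HgE : globgen E) (e : DF E C) (He : isDF e)
  (G : DF (gammaDC C) E) (HG : isDF G) (HeG : DFcomp_eq e G (eps C)).
Let phi := gamma_lift HC HE HgE e He.

Lemma gamma_lift_comp_eq_id : DFcomp_eq phi G (DF_id (gammaDC C)).
Proof.
  destruct HeG as (GO & GV & GH & GC & GU & GM).
  repeat split; intros; apply sig_eq; cbn; auto.
Qed.

Lemma comp_gamma_lift_eq : DFcomp_eq e (DFcomp G phi) e.
Proof.
  pose proof (sub_isDC HC (gammaSub C)) as HgC.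
  pose proof (gamma_lift_isDF HC HE HgE e He) as Hphi.
  destruct HeG as (GO & GV & GH & GC & GU & GM).
  repeat split; try (intros; apply GO || apply GV || apply GH || apply GC).
  - intros x ex0; cbn [fO fU fC DFcomp]; totalize; unfold compU.
    rewrite (fC_ccompT e He), <- (ccompT_assoc HC) by boundary.
    assert (ex : ccod (fU e (fO G (fO phi x))) = cdom (fC e (fU G (fO phi x)))) by boundary.
    specialize (GU (fO phi x) ex); totalize_in GU; rewrite GU, GC; cbn.
    apply (ccompT_idl HC); boundary.
  - intros h k p p0 ex0; cbn [fO fM fH fC DFcomp]; totalize; unfold compM.
    rewrite (fC_ccompT e He), <- (ccompT_assoc HC) by boundary.
    assert (pg : @htgt (gammaDC C) (fH phi h) = @hsrc (gammaDC C) (fH phi k)) by boundary.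
    assert (pe : htgt (fH G (fH phi h)) = hsrc (fH G (fH phi k))) by boundary.
    assert (ex : ccod (fM e (fH G (fH phi h)) (fH G (fH phi k)) pe)
                 = cdom (fC e (fM G (fH phi h) (fH phi k) pg))) by (totalize; boundary).
    specialize (GM _ _ pg pe ex); totalize_in GM; rewrite GM, GC.
    rewrite <- (fMTE (eps C) _ _ pg), <- (fMTE phi _ _ p); cbn; totalize.
    apply (ccompT_idl HC); boundary.
Qed.

End Characterization.

Theorem corollary3p7 (C : DC) (HC : isDC C) :
  (forall (D : DC), isDC D -> globgen D ->
     forall F : DF D C, isDF F ->
       exists! Ft : DF D (gammaDC C), isDF Ft /\ DFcomp_eq (eps C) Ft F)
  /\
  (forall (E : DC) (e : DF E C), isDC E -> globgen E -> isDF e ->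
     (forall (D : DC), isDC D -> globgen D ->
        forall F : DF D C, isDF F ->
          exists! Ft : DF D E, isDF Ft /\ DFcomp_eq e Ft F) ->
     exists phi : DF E (gammaDC C),
       isDF phi /\ double_iso phi /\ DFcomp_eq (eps C) phi e).
Proof.
  split.
  - intros D HD HgD F HF; exists (gamma_lift HC HD HgD F HF); split.
    + split; [apply gamma_lift_isDF | apply eps_gamma_lift].
    + intros Ft [HFt HeFt]; symmetry; apply (gamma_lift_unique HC); assumption.
  - intros E e HE HgE He UP.
    pose proof (sub_isDC HC (gammaSub C)) as HgC.
    set (phi := gamma_lift HC HE HgE e He).
    destruct (UP _ HgC (gamma_globgen C) (eps C) (eps_isDF HC)) as [G [[HG HeG] _]].
    destruct (UP E HE HgE e He) as [Ft [_ Hunique]].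
    assert (Gphi : DFcomp G phi = DF_id E).
    { rewrite <- (Hunique (DFcomp G phi)), (Hunique (DF_id E)); auto.
      - split; [apply (DF_id_isDF HE) | apply (DFcomp_eq_id_r HC e He)].
      - split; [apply (DFcomp_isDF HE HgC HE G HG); apply gamma_lift_isDF |].
        apply (comp_gamma_lift_eq HC HE HgE e He G HG HeG). }
    exists phi; split; [apply gamma_lift_isDF | split; [| apply eps_gamma_lift]].
    exists G; split; [exact HG | split].
    + rewrite <- Gphi; apply DFcomp_eq_self.
    + apply (gamma_lift_comp_eq_id HC HE HgE e He G HeG).
Qed.
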